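(* Consider the switched discrete-time system $$x[k+1]=Ax[k]+\sigma[k]Bu[k]+(1-\sigma[k])d[k]+w[k],\qquad y[k]=x[k]+v[k],$$ with $x[k]\in\mathbb{R}^n$, $u[k]\in\mathbb{R}^m$, $d[k]\in\mathcal{D}$, $w[k]\in\mathcal{W}$, $v[k]\in\mathcal{V}$ arbitrary within their sets, $\sigma[k]\in\{0,1\}$, and sets $\mathcal{U}$, $\mathcal{S}\subset\mathcal{X}$ satisfying the standing assumptions in the context. Let $(A_K,B_K,C_K,D_K)$ be a controller realization with state dimension $n_K$ such that $A_{CL}=\begin{bmatrix}A+BD_K & BC_K\\ B_K & A_K\end{bmatrix}$ is Schur, and let polyhedral $\Omega_I\subset\mathbb{R}^n$, $\Omega_O\subset\mathbb{R}^{n+n_K}$ containing the respective origins satisfy I1)–I3) and O1)–O4) (with respect to this realization). Let $\mathbf{K}(z):=C_K(zI_{n_K}-A_K)^{-1}B_K+D_K$, and let $(A_K',B_K',C_K',D_K')$ be any other state-space realization of $\mathbf{K}(z)$ (of any state dimension). Then, if $x[k_0]\in\mathcal{S}_c$ and Algorithm 1 is applied with its Control step (and its controller-state resets to zero) using the realization $(A_K',B_K',C_K',D_K')$ instead of $(A_K,B_K,C_K,D_K)$, the following still hold: (a) $x[k]\in\mathcal{X}$ and $u[k]\in\mathcal{U}$ for all $k\ge k_0$; (b) there exists $T_{\max}\in\mathbb{N}_{>0}$ such that if $\sigma[k_0]=1$ then $\sigma[k_0+T_0]=0$ for some $T_0\in\{1,\dots,T_{\max}\}$, and for every $k>k_0$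 with $\sigma[k]=1$, $\sigma[k-1]=0$, there is $T\in\{1,\dots,T_{\max}\}$ with $\sigma[k+T]=0$; (c) for all $k\ge k_0$, $\sigma[k]=0$ implies $x[k]\in\mathcal{S}$.
   Context: Notation: $\oplus$ Minkowski sum, $\ominus$ Pontryagin difference, $(-\mathcal{X})=\{-x:x\in\mathcal{X}\}$, $\mathrm{conv}$ convex hull, $\|\cdot\|$ Euclidean / induced 2-norm. Standing assumptions: $\mathcal{D},\mathcal{W},\mathcal{V},\mathcal{S},\mathcal{X}\subset\mathbb{R}^n$ and $\mathcal{U}\subset\mathbb{R}^m$ are polytopes containing the origin in their interiors; $\mathcal{S}\subset\mathcal{X}$; there exist $\varepsilon_p,\varepsilon_m\in(0,1)$ with $\mathcal{V}\subseteq\varepsilon_p\mathcal{S}$, $(-\mathcal{V})\subseteq\varepsilon_m\mathcal{S}$; some closed Euclidean ball of positive radius centered at $0$ lies in $\mathcal{S}$; $\mathcal{S}^+:=A\mathcal{S}\oplus\mathcal{W}\oplus\mathcal{D}\subseteq\mathcal{X}$. Define $\mathcal{S}_c:=\mathrm{conv}(\mathcal{S},\mathcal{S}^+)$, $\mathcal{Z}:=\mathcal{W}\times\mathcal{V}$, $\mathcal{N}:=(-\mathcal{V})\oplus\mathcal{V}$, $B_{CL}=\begin{bmatrix}I_n & BD_K\\ O & B_K\end{bmatrix}$, $C_{CL}=[D_K\ C_K]$, $D_{CL}=[O\ D_K]$. Conditions: I1) $\Omega_I\subseteq\varepsilon_s\mathcal{S}$ for a given $\varepsilon_s\in(0,1)$;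 I2) there is $\alpha>0$ with $\{r:\|r\|\le\alpha\}\subseteq\Omega_I\ominus\mathcal{N}$; I3) there is $\beta\in(0,1)$ with $\bigoplus_{i=0}^N[I_n\ O]A_{CL}^iB_{CL}\mathcal{Z}\subseteq\beta(\Omega_I\ominus\mathcal{N})$ for all $N\in\mathbb{N}$; O1) $\mathcal{S}_c\times\{0_{n_K}\}\subseteq\Omega_O$; O2) $A_{CL}\Omega_O\oplus B_{CL}\mathcal{Z}\subseteq\Omega_O$; O3) $[I_n\ O]\Omega_O\subseteq\mathcal{X}$; O4) $C_{CL}\Omega_O\oplus D_{CL}\mathcal{Z}\subseteq\mathcal{U}$. Algorithm 1 (with a controller realization $(\hat A,\hat B,\hat C,\hat D)$ of state $\hat x_K$). Initialization: read $y[k_0]$; if $y[k_0]\in\mathcal{S}\ominus(-\mathcal{V})$, set $\sigma[k_0]=0$, $u[k_0]=0$, $k=k_0+1$, go to Monitoring; else set $k=k_0$, $\sigma[k]=1$, $\hat x_K[k]=0$, go to Control. Monitoring: read $y[k]$. If $y[k]\in\mathcal{S}\ominus(-\mathcal{V})$: if $\sigma[k-1]=1$ and $y[k]\notin\Omega_I\ominus(-\mathcal{V})$, set $\sigma[k]=1$ and go to Control; else set $\sigma[k]=0$, $u[k]=0$, increment $k$, go to Monitoring. Otherwise: if $\sigma[k-1]=0$ set $\hat x_K[k]=0$; set $\sigma[k]=1$ and go to Control. Control: $u[k]=\hat C\hat x_K[k]+\hat D y[k]$, $\hat x_K[k+1]=\hat A\hat x_K[k]+\hat By[k]$, increment $k$,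 go to Monitoring. *)

From mathcomp Require Import all_boot all_algebra.
From mathcomp Require Import boolp classical_sets reals.
From mathcomp Require Import complex.

Set Implicit Arguments.
Unset Strict Implicit.
Unset Printing Implicit Defensive.

Import GRing.Theory Num.Theory.
Local Open Scope ring_scope.
Local Open Scope classical_set_scope.

Section SetOps.
Variable R : realType.

Definition enorm n (x : 'cV[R]_n) : R := Num.sqrt (\sum_i (x i 0) ^+ 2).

Definition polyhedron n (P : set 'cV[R]_n) : Prop :=
  exists (k : nat) (H : 'M[R]_(k, n)) (h : 'cV[R]_k),
    P = [set x | forall i, (H *m x) i 0 <= h i 0].

Definition bounded_set n (P : set 'cV[R]_n) : Prop :=
  exists M : R, forall x, P x -> enorm x <= M.

Definition polytope n (P : set 'cV[R]_n) : Prop := polyhedron P /\ bounded_set P.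

Definition cball0 n (r : R) : set 'cV[R]_n := [set x | enorm x <= r].

Definition zero_in_interior n (P : set 'cV[R]_n) : Prop :=
  exists2 r : R, 0 < r & @cball0 n r `<=` P.

Definition msum n (X Y : set 'cV[R]_n) : set 'cV[R]_n :=
  [set z | exists x y, [/\ X x, Y y & z = x + y]].

Definition pdiff n (X Y : set 'cV[R]_n) : set 'cV[R]_n :=
  [set z | forall y, Y y -> X (z + y)].

Definition setneg n (X : set 'cV[R]_n) : set 'cV[R]_n := [set - x | x in X].

Definition sscale n (c : R) (X : set 'cV[R]_n) : set 'cV[R]_n := [set c *: x | x in X].

Definition mimage p q (M : 'M[R]_(p, q)) (X : set 'cV[R]_q) : set 'cV[R]_p :=
  [set M *m x | x in X].

Definition conv n (X : set 'cV[R]_n) : set 'cV[R]_n :=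
  [set z | exists (k : nat) (a : 'I_k -> R) (p : 'I_k -> 'cV[R]_n),
     [/\ forall i, 0 <= a i, \sum_i a i = 1, forall i, X (p i)
       & z = \sum_i a i *: p i]].

Definition sprod p q (X : set 'cV[R]_p) (Y : set 'cV[R]_q) : set 'cV[R]_(p + q) :=
  [set col_mx x y | x in X & y in Y].

Fixpoint msum_iter n (F : nat -> set 'cV[R]_n) (N : nat) : set 'cV[R]_n :=
  match N with
  | 0 => F 0%N
  | N'.+1 => msum (msum_iter F N') (F N)
  end.

Definition schur n (M : 'M[R]_n) : Prop :=
  forall z : R[i], eigenvalue (map_mx (fun r => (r%:C)%C) M) z -> `|z| < 1.

Definition tfun p q k (A : 'M[R]_k) (B : 'M[R]_(k, q)) (C : 'M[R]_(p, k))
    (D : 'M[R]_(p, q)) (z : R[i]) : 'M[R[i]]_(p, q) :=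
  map_mx (fun r => (r%:C)%C) C
    *m invmx (z%:M - map_mx (fun r => (r%:C)%C) A) *m map_mx (fun r => (r%:C)%C) B
  + map_mx (fun r => (r%:C)%C) D.

(* Two realizations have the same transfer matrix K(z) (as rational functions):
   they agree at every z where both resolvents are defined. *)
Definition same_tf p q k k' (A : 'M[R]_k) (B : 'M[R]_(k, q)) (C : 'M[R]_(p, k))
    (D : 'M[R]_(p, q)) (A' : 'M[R]_k') (B' : 'M[R]_(k', q)) (C' : 'M[R]_(p, k'))
    (D' : 'M[R]_(p, q)) : Prop :=
  forall z : R[i],
    (z%:M - map_mx (fun r => (r%:C)%C) A) \in unitmx ->
    (z%:M - map_mx (fun r => (r%:C)%C) A') \in unitmx ->
    tfun A B C D z = tfun A' B' C' D' z.

End SetOps.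

Section Algorithm1.
Variables (R : realType) (n m nh : nat).
Variables (A : 'M[R]_n) (B : 'M[R]_(n, m)).
Variables (Ah : 'M[R]_nh) (Bh : 'M[R]_(nh, n)) (Ch : 'M[R]_(m, nh)) (Dh : 'M[R]_(m, n)).
Variables (S V OmegaI : set 'cV[R]_n).
Variables (d w v : nat -> 'cV[R]_n).
Variables (k0 : nat) (x0 : 'cV[R]_n).

Definition SmV := pdiff S (setneg V).
Definition OmV := pdiff OmegaI (setneg V).

(* switching decision sigma[k] given sigma[k-1] = sp and measurement y[k]
   (the Initialization step coincides with the Monitoring step with sp = 0) *)
Definition a1_sigma (sp : bool) (y : 'cV[R]_n) : bool :=
  if y \in SmV then sp && (y \notin OmV) else true.

Definition a1_xh_used (sp : bool) (xh : 'cV[R]_nh) : 'cV[R]_nh :=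
  if sp then xh else 0.

Definition a1_input (sp : bool) (xh : 'cV[R]_nh) (y : 'cV[R]_n) : 'cV[R]_m :=
  if a1_sigma sp y then Ch *m a1_xh_used sp xh + Dh *m y else 0.

(* one step at (absolute) time k; state = (x[k], xhat_K[k], sigma[k-1]) *)
Definition a1_step (k : nat) (st : 'cV[R]_n * 'cV[R]_nh * bool) :
    'cV[R]_n * 'cV[R]_nh * bool :=
  let: (x, xh, sp) := st in
  let y := x + v k in
  let s := a1_sigma sp y in
  let u := a1_input sp xh y in
  let xh' := if s then Ah *m a1_xh_used sp xh + Bh *m y else xh in
  let x' := A *m x + (s%:R : R) *: (B *m u) + (1 - (s%:R : R)) *: d k + w k in
  (x', xh', s).

(* state at time k0 + j *)
Fixpoint a1_run (j : nat) : 'cV[R]_n * 'cV[R]_nh * bool :=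
  match j with
  | 0 => (x0, 0, false)
  | j'.+1 => a1_step (k0 + j') (a1_run j')
  end.

(* the signals, for k >= k0 *)
Definition a1_x (k : nat) : 'cV[R]_n := (a1_run (k - k0)).1.1.
Definition a1_prev (k : nat) : bool := (a1_run (k - k0)).2.
Definition a1_xh (k : nat) : 'cV[R]_nh := (a1_run (k - k0)).1.2.
Definition a1_y (k : nat) : 'cV[R]_n := a1_x k + v k.
Definition a1_sig (k : nat) : bool := a1_sigma (a1_prev k) (a1_y k).
Definition a1_u (k : nat) : 'cV[R]_m := a1_input (a1_prev k) (a1_xh k) (a1_y k).

End Algorithm1.

Section ClosedLoop.
Variables (R : realType) (n m nK : nat).
Variables (A : 'M[R]_n) (B : 'M[R]_(n, m)).
Variables (AK : 'M[R]_nK) (BK : 'M[R]_(nK, n)) (CK : 'M[R]_(m, nK)) (DK : 'M[R]_(m, n)).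

Definition A_CL : 'M[R]_(n + nK) := block_mx (A + B *m DK) (B *m CK) BK AK.
Definition B_CL : 'M[R]_(n + nK, n + n) := block_mx (1%:M : 'M[R]_n) (B *m DK) 0 BK.
Definition C_CL : 'M[R]_(m, n + nK) := row_mx DK CK.
Definition D_CL : 'M[R]_(m, n + n) := row_mx (0 : 'M[R]_(m, n)) DK.
Definition proj_x : 'M[R]_(n, n + nK) := row_mx (1%:M : 'M[R]_n) (0 : 'M[R]_(n, nK)).
End ClosedLoop.

Definition Splus (R : realType) n (A : 'M[R]_n) (S W D : set 'cV[R]_n) :=
  msum (msum (mimage A S) W) D.
Definition Sconv (R : realType) n (A : 'M[R]_n) (S W D : set 'cV[R]_n) :=
  conv (S `|` Splus A S W D).
Definition Zset (R : realType) n (W V : set 'cV[R]_n) := sprod W V.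
Definition Nset (R : realType) n (V : set 'cV[R]_n) := msum (setneg V) V.

(* Equal transfer functions have equal feedthrough and Markov parameters:
   compare c + N/chi with N/chi strictly proper away from the roots of chi.
   Hence, from a reset, the state of the new controller realization stays
   output-equivalent to the state of the nominal one driven by the same
   measurements, and Algorithm 1 produces exactly the inputs of the nominal
   closed loop.  The invariant "(x, x_K) in Omega_O while controlling, x in S_c
   while monitoring" then gives (a) and (c) through O1-O4.  For (b), I3 applied
   to sign-matched disturbances bounds the absolute sums of the free responses
   [I O] A_CL^i [I; O], so one of them, at a horizon T, is small enough for the
   response to any x in S_c to fit, by convexity, in the margin between
   beta (Omega_I - N) and the alpha-ball of I2: after T steps of control the
   measurement is in Omega_I - (-V) and monitoring resumes. *)

From mathcomp Require Import all_boot all_algebra.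
From mathcomp Require Import boolp classical_sets reals.
From mathcomp Require Import complex.
From mathcomp Require Import order zify ring lra.
Import Order.TTheory GRing.Theory Num.Theory.
Local Open Scope ring_scope.
Local Open Scope classical_set_scope.
Set Implicit Arguments.
Unset Strict Implicit.
Unset Printing Implicit Defensive.

Section Resolvent.
Variables (F : fieldType) (k : nat) (A : 'M[F]_k).

Lemma Cayley_Hamilton_sum : \sum_(i < k.+1) (char_poly A)`_i *: A ^+ i = 0.
Proof.
case: k A => [|k'] A'; first by rewrite flatmx0.
apply: (etrans _ (Cayley_Hamilton A')).
rewrite -[char_poly A' in RHS]coefK poly_def rmorph_sum size_char_poly.
apply: eq_bigr => i _.
by rewrite -[RHS]/(horner_mx A' _) horner_mxZ rmorphXn /= horner_mx_X.
Qed.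

Lemma mulmx_subr_geometric z i :
  (z%:M - A) *m (\sum_(a < i) z ^+ a *: A ^+ (i.-1 - a)) = z ^+ i *: 1%:M - A ^+ i.
Proof.
elim: i => [|i IH]; first by rewrite big_ord0 mulmx0 !expr0 scale1r subrr.
rewrite big_ord_recl /= expr0 scale1r subn0.
have lift_sub (a : 'I_i) : (i - lift ord0 a = i.-1 - a)%N by rewrite /= /bump /=; lia.
under eq_bigr => a _ do rewrite lift_sub exprS -scalerA.
rewrite -scaler_sumr mulmxDr -scalemxAr IH mulmxBl mul_scalar_mx.
have -> : A *m A ^+ i = A ^+ i.+1 by rewrite exprS.
by rewrite scalerBr scalerA -exprS addrC addrA subrK.
Qed.

(* A polynomial-in-z adjugate of [z I - A], built from Cayley-Hamilton. *)
Definition resolvent_adj z : 'M[F]_k :=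
  \sum_(i < k.+1) (char_poly A)`_i *: \sum_(a < i) z ^+ a *: A ^+ (i.-1 - a).

Lemma mulmx_resolvent_adj z :
  (z%:M - A) *m resolvent_adj z = (char_poly A).[z] *: 1%:M.
Proof.
rewrite /resolvent_adj mulmx_sumr.
under eq_bigr => i _ do rewrite -scalemxAr mulmx_subr_geometric scalerBr scalerA.
rewrite sumrB Cayley_Hamilton_sum subr0 -scaler_suml horner_coef size_char_poly.
by congr (_ *: _); apply: eq_bigr.
Qed.

Lemma resolvent_inverse z : (char_poly A).[z] != 0 ->
  (z%:M - A) *m ((char_poly A).[z]^-1 *: resolvent_adj z) = 1%:M.
Proof. by move=> chi_z; rewrite -scalemxAr mulmx_resolvent_adj scalerA mulVf // scale1r. Qed.

Lemma resolvent_unitmx z : (char_poly A).[z] != 0 -> (z%:M - A) \in unitmx.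
Proof. by move=> chi_z; case: (mulmx1_unit (resolvent_inverse chi_z)). Qed.

Lemma invmx_resolvent z : (char_poly A).[z] != 0 ->
  invmx (z%:M - A) = (char_poly A).[z]^-1 *: resolvent_adj z.
Proof.
move=> chi_z; rewrite -[invmx _]mulmx1 -(resolvent_inverse chi_z) mulmxA.
by rewrite mulVmx ?mul1mx ?resolvent_unitmx.
Qed.

Variables (p q : nat) (L : 'M[F]_(p, k)) (Rm : 'M[F]_(k, q)).

Definition resolvent_numer r c : {poly F} :=
  \poly_(a < k) \sum_(i < k.+1)
     (if (a < i)%N then (char_poly A)`_i * (L *m A ^+ (i.-1 - a) *m Rm) r c else 0).

Lemma size_resolvent_numer r c : (size (resolvent_numer r c) <= k)%N.
Proof. exact: size_poly. Qed.

Lemma horner_resolvent_numer r c z :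
  (L *m resolvent_adj z *m Rm) r c = (resolvent_numer r c).[z].
Proof.
rewrite /resolvent_numer horner_poly /resolvent_adj.
under [RHS]eq_bigr => a _ do rewrite mulr_suml.
rewrite [RHS]exchange_big /= mulmx_sumr mulmx_suml summxE.
apply: eq_bigr => i _.
rewrite -scalemxAr -scalemxAl mxE mulmx_sumr mulmx_suml summxE mulr_sumr.
have ik : (i <= k)%N by rewrite -ltnS ltn_ord.
rewrite (big_ord_widen k (fun a =>
  (char_poly A)`_i * (L *m (z ^+ a *: A ^+ (i.-1 - a)) *m Rm) r c) ik).
rewrite big_mkcond /=; apply: eq_bigr => a _; case: ifP => _; last by rewrite mul0r.
by rewrite -scalemxAr -scalemxAl mxE mulrCA mulrC.
Qed.

Lemma resolvent_entry_frac r c z : (char_poly A).[z] != 0 ->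
  (L *m invmx (z%:M - A) *m Rm) r c = (resolvent_numer r c).[z] / (char_poly A).[z].
Proof.
move=> chi_z; rewrite invmx_resolvent // -scalemxAr -scalemxAl mxE.
by rewrite horner_resolvent_numer mulrC.
Qed.

Lemma scale_resolvent z : (z%:M - A) \in unitmx ->
  z *: (L *m invmx (z%:M - A) *m Rm) = L *m Rm + L *m invmx (z%:M - A) *m (A *m Rm).
Proof.
move=> zA_unit; have := mulVmx zA_unit.
rewrite mulmxBr mul_mx_scalar => /eqP; rewrite subr_eq => /eqP z_inv.
by rewrite scalemxAl scalemxAr z_inv mulmxDr mulmx1 mulmxDl !mulmxA.
Qed.

End Resolvent.

Lemma poly_horner_eq0 (F : numFieldType) (P : {poly F}) :
  (forall z, P.[z] = 0) -> P = 0.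
Proof.
move=> P0; apply/eqP; apply: contraT => P_neq0.
pose rs := [seq (i%:R : F) | i <- iota 0 (size P)].
have rs_roots : all (root P) rs by apply/allP => x /mapP [i _ ->]; rewrite /root P0.
have rs_uniq : uniq rs.
  by rewrite map_inj_uniq ?iota_uniq // => i j /eqP; rewrite eqr_nat => /eqP.
by have := max_poly_roots P_neq0 rs_roots rs_uniq; rewrite size_map size_iota ltnn.
Qed.

Lemma proper_frac_const_eq (F : numFieldType) (chi chi' N N' : {poly F}) (k k' : nat)
    (c c' : F) :
  chi \is monic -> size chi = k.+1 -> chi' \is monic -> size chi' = k'.+1 ->
  (size N <= k)%N -> (size N' <= k')%N ->
  (forall z, chi.[z] != 0 -> chi'.[z] != 0 ->
    c + N.[z] / chi.[z] = c' + N'.[z] / chi'.[z]) -> c = c'.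
Proof.
move=> chi_monic chi_size chi'_monic chi'_size N_size N'_size frac_eq.
pose P := (c - c')%:P * (chi * chi') + N * chi' - N' * chi.
have chichi'_neq0 : chi * chi' != 0 by rewrite mulf_neq0 // monic_neq0.
have P0 : P = 0.
  suff : P * (chi * chi') = 0.
    by move/eqP; rewrite mulf_eq0 (negbTE chichi'_neq0) orbF => /eqP.
  apply: poly_horner_eq0 => z; rewrite hornerM.
  have [z0|chi_z] := eqVneq chi.[z] 0; first by rewrite hornerM z0 mul0r mulr0.
  have [z0|chi'_z] := eqVneq chi'.[z] 0; first by rewrite hornerM z0 !mulr0.
  rewrite /P !(hornerD, hornerN, hornerM, hornerC).
  have -> : c - c' = N'.[z] / chi'.[z] - N.[z] / chi.[z].
    apply: (addIr (N.[z] / chi.[z])).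
    by rewrite addrAC frac_eq // addrAC subrr add0r subrK.
  by field; apply/andP.
have top_size : size (chi * chi') = (k + k').+1.
  by rewrite size_mul ?monic_neq0 // chi_size chi'_size addSn addnS.
have := congr1 (fun P : {poly F} => P`_(k + k')) P0.
rewrite /P coef0 coefB coefD coefCM.
have -> : (chi * chi')`_(k + k') = 1.
  by have := lead_coef_monicM chi' chi_monic; rewrite (monicP chi'_monic) /lead_coef top_size.
rewrite [(N * chi')`_ _]nth_default; last first.
  by apply: leq_trans (size_polyMleq _ _) _; rewrite chi'_size; lia.
rewrite [(N' * chi)`_ _]nth_default; last first.
  by apply: leq_trans (size_polyMleq _ _) _; rewrite chi_size; lia.
by rewrite mulr1 addr0 subr0 => /eqP; rewrite subr_eq0 => /eqP.
Qed.

Section MarkovParameters.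
Variables (F : numFieldType) (k k' p q : nat).
Variables (A : 'M[F]_k) (C : 'M[F]_(p, k)) (A' : 'M[F]_k') (C' : 'M[F]_(p, k')).

Local Notation regular z := ((char_poly A).[z] != 0 /\ (char_poly A').[z] != 0).

Lemma transfer_feedthrough_eq (E E' : 'M[F]_(p, q)) (Rm : 'M_(k, q)) (Rm' : 'M_(k', q)) :
  (forall z, regular z ->
     E + C *m invmx (z%:M - A) *m Rm = E' + C' *m invmx (z%:M - A') *m Rm') ->
  E = E'.
Proof.
move=> tf_eq; apply/matrixP => r c.
apply: (proper_frac_const_eq (char_poly_monic A) (size_char_poly A)
   (char_poly_monic A') (size_char_poly A')
   (size_resolvent_numer A C Rm r c) (size_resolvent_numer A' C' Rm' r c)).
move=> z chi_z chi'_z; rewrite -resolvent_entry_frac // -resolvent_entry_frac //.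
by have := congr1 (fun M : 'M_(p, q) => M r c) (tf_eq z (conj chi_z chi'_z)); rewrite !mxE.
Qed.

Lemma transfer_shift_eq (Rm : 'M_(k, q)) (Rm' : 'M_(k', q)) :
  (forall z, regular z ->
     C *m invmx (z%:M - A) *m Rm = C' *m invmx (z%:M - A') *m Rm') ->
  C *m Rm = C' *m Rm' /\
  (forall z, regular z ->
     C *m invmx (z%:M - A) *m (A *m Rm) = C' *m invmx (z%:M - A') *m (A' *m Rm')).
Proof.
move=> tf_eq.
have scaled_eq z : regular z ->
    C *m Rm + C *m invmx (z%:M - A) *m (A *m Rm) =
    C' *m Rm' + C' *m invmx (z%:M - A') *m (A' *m Rm').
  by case=> chi_z chi'_z; rewrite -!scale_resolvent ?resolvent_unitmx ?tf_eq.
have Markov_eq := transfer_feedthrough_eq scaled_eq.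
by split=> // z /scaled_eq; rewrite Markov_eq => /addrI.
Qed.

Lemma transfer_markov_eq (B : 'M[F]_(k, q)) (D : 'M[F]_(p, q))
    (B' : 'M[F]_(k', q)) (D' : 'M[F]_(p, q)) :
  (forall z, (z%:M - A) \in unitmx -> (z%:M - A') \in unitmx ->
    C *m invmx (z%:M - A) *m B + D = C' *m invmx (z%:M - A') *m B' + D') ->
  D = D' /\ forall i, C *m A ^+ i *m B = C' *m A' ^+ i *m B'.
Proof.
move=> tf_eq.
have tf_eq' z : regular z ->
    D + C *m invmx (z%:M - A) *m B = D' + C' *m invmx (z%:M - A') *m B'.
  by case=> chi_z chi'_z; rewrite addrC tf_eq ?resolvent_unitmx // addrC.
have D_eq := transfer_feedthrough_eq tf_eq'.
have shifted i : forall z, regular z ->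
    C *m invmx (z%:M - A) *m (A ^+ i *m B) = C' *m invmx (z%:M - A') *m (A' ^+ i *m B').
  elim: i => [|i IH] z z_reg.
    by rewrite !expr0 !mul1mx; apply: (addrI D); rewrite tf_eq' // D_eq.
  have -> : A ^+ i.+1 *m B = A *m (A ^+ i *m B) by rewrite mulmxA exprS.
  have -> : A' ^+ i.+1 *m B' = A' *m (A' ^+ i *m B') by rewrite mulmxA exprS.
  exact: (transfer_shift_eq IH).2.
split=> // i; rewrite -!mulmxA; exact: (transfer_shift_eq (shifted i)).1.
Qed.

End MarkovParameters.

Lemma map_mxXn (R : realType) k (M : 'M[R]_k) i :
  map_mx (real_complex R) (M ^+ i) = map_mx (real_complex R) M ^+ i.
Proof.
elim: i => [|i IH]; first by rewrite !expr0 map_mx1.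
by rewrite !exprS -!mulmxE map_mxM IH.
Qed.

Lemma same_tf_markov (R : realType) k k' p q (A : 'M[R]_k) (B : 'M[R]_(k, q))
    (C : 'M[R]_(p, k)) (D : 'M[R]_(p, q)) (A' : 'M[R]_k') (B' : 'M[R]_(k', q))
    (C' : 'M[R]_(p, k')) (D' : 'M[R]_(p, q)) :
  same_tf A B C D A' B' C' D' ->
  D = D' /\ forall i, C *m A ^+ i *m B = C' *m A' ^+ i *m B'.
Proof.
move=> /transfer_markov_eq [D_eq Markov_eq]; split.
  exact: (map_mx_inj (f := real_complex R)).
move=> i; apply: (map_mx_inj (f := real_complex R)).
by rewrite !map_mxM !map_mxXn Markov_eq.
Qed.

Section SetGeometry.
Variable R : realType.

Lemma enorm0 n : enorm (0 : 'cV[R]_n) = 0.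
Proof. by rewrite /enorm big1 ?sqrtr0 // => i _; rewrite mxE expr2 mulr0. Qed.

Lemma enormZ n (c : R) (x : 'cV[R]_n) : enorm (c *: x) = `|c| * enorm x.
Proof.
rewrite /enorm -sqrtr_sqr -sqrtrM ?sqr_ge0 // mulr_sumr.
by congr Num.sqrt; apply: eq_bigr => i _; rewrite mxE exprMn.
Qed.

Lemma enorm_delta n (c : R) (l : 'I_n) : enorm (c *: delta_mx l (0 : 'I_1)) = `|c|.
Proof.
rewrite /enorm (bigD1 l) //= big1 ?addr0; first by rewrite !mxE !eqxx mulr1 sqrtr_sqr.
by move=> i /negbTE il; rewrite !mxE il /= mulr0 expr2 mulr0.
Qed.

Lemma zero_in_interior0 n (P : set 'cV[R]_n) : zero_in_interior P -> P 0.
Proof. by case=> r r_gt0 ball_P; apply: ball_P; rewrite /cball0 /= enorm0 ltW. Qed.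

Lemma normr_coord_le_enorm n (x : 'cV[R]_n) i : `|x i 0| <= enorm x.
Proof.
rewrite /enorm -sqrtr_sqr ler_wsqrtr // (bigD1 i) //= lerDl.
by apply: sumr_ge0 => j _; rewrite sqr_ge0.
Qed.

Lemma enorm_le_coord n (x : 'cV[R]_n) t : 0 <= t -> (forall i, `|x i 0| <= t) ->
  enorm x <= n%:R * t.
Proof.
move=> t_ge0 x_le; have nt_ge0 : 0 <= n%:R * t by rewrite mulr_ge0.
rewrite /enorm -(ger0_norm nt_ge0) -sqrtr_sqr ler_wsqrtr //.
apply: (@le_trans _ _ (\sum_(i < n) t ^+ 2)).
  by apply: ler_sum => i _; have := x_le i; rewrite ler_norml => /andP[? ?]; nra.
rewrite sumr_const card_ord -mulr_natl exprMn.
have n_le_sqr : n%:R <= n%:R ^+ 2 :> R.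
  case: (n) => [|k]; first by rewrite expr2 mulr0.
  have : 1 <= k.+1%:R :> R by rewrite ler1n.
  by move=> ?; nra.
by have := sqr_ge0 t; nra.
Qed.

Definition coord_bound n (P : set 'cV[R]_n) (c : R) :=
  forall x, P x -> forall i, `|x i 0| <= c.

Lemma bounded_set_coord_bound n (P : set 'cV[R]_n) :
  bounded_set P -> exists c, 0 <= c /\ coord_bound P c.
Proof.
case=> M P_le; exists `|M|; split=> // x Px i.
exact: le_trans (normr_coord_le_enorm x i) (le_trans (P_le x Px) (ler_norm M)).
Qed.

Lemma coord_bound_le n (P : set 'cV[R]_n) c c' : c <= c' ->
  coord_bound P c -> coord_bound P c'.
Proof. by move=> c_le P_c x Px i; apply: le_trans (P_c x Px i) c_le. Qed.

Lemma coord_bound_setU n (P Q : set 'cV[R]_n) c :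
  coord_bound P c -> coord_bound Q c -> coord_bound (P `|` Q) c.
Proof. by move=> P_c Q_c x [/P_c | /Q_c]. Qed.

Lemma coord_bound_msum n (P Q : set 'cV[R]_n) c c' :
  coord_bound P c -> coord_bound Q c' -> coord_bound (msum P Q) (c + c').
Proof.
move=> P_c Q_c _ [x [y [Px Qy ->]]] i.
by rewrite mxE; apply: le_trans (ler_normD _ _) (lerD (P_c x Px i) (Q_c y Qy i)).
Qed.

Lemma coord_bound_sscale n (P : set 'cV[R]_n) c t : 0 <= t <= 1 ->
  coord_bound P c -> coord_bound (sscale t P) c.
Proof.
move=> /andP[t_ge0 t_le1] P_c _ [x Px <-] i.
rewrite mxE normrM ger0_norm //; apply: le_trans (P_c x Px i).
by rewrite ler_piMl.
Qed.

Lemma coord_bound_conv n (P : set 'cV[R]_n) c :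
  coord_bound P c -> coord_bound (conv P) c.
Proof.
move=> P_c _ [k [a [x [a_ge0 a_sum1 Px ->]]]] i.
rewrite summxE; apply: le_trans (ler_norm_sum _ _ _) _.
apply: (@le_trans _ _ (\sum_(j < k) a j * c)); last by rewrite -mulr_suml a_sum1 mul1r.
apply: ler_sum => j _; rewrite mxE normrM (ger0_norm (a_ge0 j)).
exact: ler_wpM2l (P_c _ (Px j) i).
Qed.

Lemma normr_mulmx_coord_le p q (M : 'M[R]_(p, q)) (x : 'cV[R]_q) e c :
  (forall i j, `|M i j| <= e) -> (forall j, `|x j 0| <= c) ->
  forall i, `|(M *m x) i 0| <= q%:R * (e * c).
Proof.
move=> M_le x_le i; rewrite mxE; apply: le_trans (ler_norm_sum _ _ _) _.
apply: (@le_trans _ _ (\sum_(j < q) e * c)).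
  by apply: ler_sum => j _; rewrite normrM ler_pM.
by rewrite sumr_const card_ord mulr_natl.
Qed.

Lemma coord_bound_mimage p q (M : 'M[R]_(p, q)) (P : set 'cV[R]_q) c :
  coord_bound P c -> exists e, coord_bound (mimage M P) e.
Proof.
pose e := \sum_i \sum_j `|M i j|.
have M_le i j : `|M i j| <= e.
  rewrite /e (bigD1 i) //= (bigD1 j) //= -addrA lerDl.
  by rewrite addr_ge0 // sumr_ge0 // => *; rewrite sumr_ge0.
move=> P_c; exists (q%:R * (e * c)) => _ [x Px <-].
exact: normr_mulmx_coord_le M_le (P_c x Px).
Qed.

Lemma coord_bound_Sconv n (A : 'M[R]_n) (S W D : set 'cV[R]_n) cS cW cD :
  0 <= cS -> coord_bound S cS -> coord_bound W cW -> coord_bound D cD ->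
  exists c, 0 <= c /\ coord_bound (Sconv A S W D) c.
Proof.
move=> cS_ge0 S_c W_c D_c; have [cA AS_c] := coord_bound_mimage A S_c.
pose cSp := cA + cW + cD.
have Sp_c : coord_bound (Splus A S W D) cSp by apply: coord_bound_msum => //; apply: coord_bound_msum.
exists (Num.max cS cSp); split; first by rewrite le_max cS_ge0.
apply: coord_bound_conv; apply: coord_bound_setU.
  by apply: coord_bound_le S_c; rewrite le_max lexx.
by apply: coord_bound_le Sp_c; rewrite le_max lexx orbT.
Qed.

Lemma Splus_sub_Sconv n (A : 'M[R]_n) (S W D : set 'cV[R]_n) :
  Splus A S W D `<=` Sconv A S W D.
Proof.
move=> x Sp_x; exists 1%N, (fun _ => 1), (fun _ => x); split.
- by move=> _; exact: ler01.
- by rewrite big_ord1.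
- by move=> _; right.
- by rewrite big_ord1 scale1r.
Qed.

Lemma polyhedron_convex n (P : set 'cV[R]_n) x y t : polyhedron P -> P x -> P y ->
  0 <= t <= 1 -> P (t *: x + (1 - t) *: y).
Proof.
case=> k [H [h ->]] /= Px Py /andP[t_ge0 t_le1] i.
rewrite mulmxDr -!scalemxAr.
move: (H *m x) (H *m y) Px Py => Hx Hy Hx_le Hy_le; rewrite !mxE.
by have := Hx_le i; have := Hy_le i; nra.
Qed.

Lemma polyhedron_scale n (P : set 'cV[R]_n) x t : polyhedron P -> P 0 -> P x ->
  0 <= t <= 1 -> P (t *: x).
Proof.
by move=> P_poly P0 Px t01; have := polyhedron_convex P_poly Px P0 t01; rewrite scaler0 addr0.
Qed.

Lemma pdiff_convex n (P Y : set 'cV[R]_n) x y t : polyhedron P ->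
  pdiff P Y x -> pdiff P Y y -> 0 <= t <= 1 -> pdiff P Y (t *: x + (1 - t) *: y).
Proof.
move=> P_poly Px Py t01 z Yz.
have -> : t *: x + (1 - t) *: y + z = t *: (x + z) + (1 - t) *: (y + z).
  by apply/matrixP => i j; rewrite !mxE; ring.
by apply: polyhedron_convex => //; [apply: Px | apply: Py].
Qed.

Lemma pdiff_absorb n (P Y : set 'cV[R]_n) alpha beta x e : polyhedron P ->
  cball0 alpha `<=` pdiff P Y -> 0 <= beta < 1 -> pdiff P Y x ->
  enorm e <= (1 - beta) * alpha -> pdiff P Y (beta *: x + e).
Proof.
move=> P_poly ball_P /andP[beta_ge0 beta_lt1] Px e_le.
have beta1_gt0 : 0 < 1 - beta by rewrite subr_gt0.
have -> : e = (1 - beta) *: ((1 - beta)^-1 *: e).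
  by rewrite scalerA divff ?scale1r // gt_eqF.
apply: pdiff_convex => //; last by rewrite beta_ge0 ltW.
apply: ball_P; rewrite /cball0 /= enormZ ger0_norm; last by rewrite invr_ge0 ltW.
by rewrite ler_pdivrMl.
Qed.

Lemma msum_iter_sum n p (M : nat -> 'M[R]_(n, p)) (Z : set 'cV[R]_p) N (g : nat -> 'cV[R]_p) :
  (forall i, Z (g i)) ->
  msum_iter (fun i => mimage (M i) Z) N (\sum_(i < N.+1) M i *m g i).
Proof.
move=> Zg; elim: N => [|N IH] /=; first by rewrite big_ord1; exists (g 0%N).
rewrite big_ord_recr /=; exists (\sum_(i < N.+1) M i *m g i), (M N.+1 *m g N.+1).
by split=> //; exists (g N.+1).
Qed.

Lemma summable_eventually_small p q (M : nat -> 'M[R]_(p, q)) (K eps : R) :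
  0 < eps -> 0 <= K -> (forall N i j, \sum_(t < N.+1) `|M t i j| <= K) ->
  exists2 t, (0 < t)%N & forall i j, `|M t i j| < eps.
Proof.
move=> eps_gt0 K_ge0 M_sum; apply: contrapT => no_small.
have big_entry t : eps <= \sum_i \sum_j `|M t.+1 i j|.
  have [/forallP small|] := boolP [forall i, [forall j, `|M t.+1 i j| < eps]].
    by exfalso; apply: no_small; exists t.+1 => // i j; have /forallP := small i; apply.
  move/forallPn => [i /forallPn [j]]; rewrite -leNgt => eps_le.
  apply: le_trans eps_le _; rewrite (bigD1 i) //= (bigD1 j) //= -addrA lerDl.
  by rewrite addr_ge0 // sumr_ge0 // => *; rewrite sumr_ge0.
pose T := Num.Def.archi_bound ((p * q)%:R * K / eps).
have T_big : (p * q)%:R * K < T%:R * eps.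
  by rewrite -ltr_pdivrMr //; apply: archi_boundP; rewrite divr_ge0 ?mulr_ge0 // ltW.
suff : T%:R * eps <= (p * q)%:R * K by lra.
apply: (@le_trans _ _ (\sum_(t < T) \sum_i \sum_j `|M t.+1 i j|)).
  apply: le_trans (ler_sum _ (fun (t : 'I_T) _ => big_entry t)).
  by rewrite sumr_const card_ord mulr_natl.
rewrite exchange_big /=; apply: (@le_trans _ _ (\sum_(i < p) \sum_(j < q) K)).
  apply: ler_sum => i _; rewrite exchange_big /=; apply: ler_sum => j _.
  apply: le_trans _ (M_sum T i j); rewrite [X in _ <= X]big_ord_recl /= lerDr.
  by [].
by rewrite !sumr_const !card_ord -mulrnA mulr_natl mulnC.
Qed.

Lemma lt01_le01 (t : R) : 0 < t < 1 -> 0 <= t <= 1.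
Proof. by case/andP=> t_gt0 t_lt1; rewrite !ltW. Qed.

Lemma Nset0 n (V : set 'cV[R]_n) : V 0 -> Nset V 0.
Proof. by move=> V0; exists 0, 0; split=> //; [exists 0; rewrite ?oppr0 | rewrite addr0]. Qed.

Lemma pdiff_sub n (P Y : set 'cV[R]_n) : Y 0 -> pdiff P Y `<=` P.
Proof. by move=> Y0 x /(_ 0 Y0); rewrite addr0. Qed.

End SetGeometry.

Section OutputEquivalence.
Variables (R : realType) (n m nK nK' : nat).
Variables (AK : 'M[R]_nK) (BK : 'M[R]_(nK, n)) (CK : 'M[R]_(m, nK)).
Variables (AK' : 'M[R]_nK') (BK' : 'M[R]_(nK', n)) (CK' : 'M[R]_(m, nK')).

Definition output_equiv (xK : 'cV[R]_nK) (xK' : 'cV[R]_nK') :=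
  forall i, CK *m AK ^+ i *m xK = CK' *m AK' ^+ i *m xK'.

Lemma output_equiv0 : output_equiv 0 0.
Proof. by move=> i; rewrite !mulmx0. Qed.

Lemma output_equiv_output xK xK' : output_equiv xK xK' -> CK *m xK = CK' *m xK'.
Proof. by move/(_ 0%N); rewrite !expr0 !mulmx1. Qed.

Lemma output_equiv_step xK xK' (y : 'cV[R]_n) :
  (forall i, CK *m AK ^+ i *m BK = CK' *m AK' ^+ i *m BK') ->
  output_equiv xK xK' -> output_equiv (AK *m xK + BK *m y) (AK' *m xK' + BK' *m y).
Proof.
move=> markov_eq xK_eq i; rewrite !mulmxDr !mulmxA markov_eq -!mulmxA.
have -> : AK ^+ i *m (AK *m xK) = AK ^+ i.+1 *m xK by rewrite mulmxA exprSr.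
have -> : AK' ^+ i *m (AK' *m xK') = AK' ^+ i.+1 *m xK' by rewrite mulmxA exprSr.
by rewrite !mulmxA xK_eq.
Qed.

End OutputEquivalence.

Section ClosedLoopAlgebra.
Variables (R : realType) (n m nK : nat) (A : 'M[R]_n) (B : 'M[R]_(n, m)).
Variables (AK : 'M[R]_nK) (BK : 'M[R]_(nK, n)) (CK : 'M[R]_(m, nK)) (DK : 'M[R]_(m, n)).

Lemma A_CL_step (x : 'cV[R]_n) (xK : 'cV[R]_nK) (w v : 'cV[R]_n) :
  A_CL A B AK BK CK DK *m col_mx x xK + B_CL B BK DK *m col_mx w v =
  col_mx (A *m x + B *m (CK *m xK + DK *m (x + v)) + w) (AK *m xK + BK *m (x + v)).
Proof.
rewrite /A_CL /B_CL !mul_block_col add_col_mx.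
congr col_mx; last by rewrite mul0mx add0r mulmxDr; apply/matrixP => i j; rewrite !mxE; ring.
rewrite !mulmxDl !mulmxDr !mul1mx !mulmxA.
by apply/matrixP => i j; rewrite !mxE; ring.
Qed.

Lemma C_CL_output (x : 'cV[R]_n) (xK : 'cV[R]_nK) (w v : 'cV[R]_n) :
  C_CL CK DK *m col_mx x xK + D_CL DK *m col_mx w v = CK *m xK + DK *m (x + v).
Proof.
rewrite /C_CL /D_CL !mul_row_col mul0mx add0r mulmxDr.
by apply/matrixP => i j; rewrite !mxE; ring.
Qed.

Lemma proj_x_col_mx (x : 'cV[R]_n) (xK : 'cV[R]_nK) : proj_x R n nK *m col_mx x xK = x.
Proof. by rewrite /proj_x mul_row_col mul1mx mul0mx addr0. Qed.

Lemma B_CL_process_noise (w : 'cV[R]_n) :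
  B_CL B BK DK *m col_mx w 0 = col_mx 1%:M 0 *m w.
Proof. by rewrite /B_CL mul_block_col mul_col_mx mul1mx !mulmx0 mul0mx addr0 add0r. Qed.

End ClosedLoopAlgebra.

Section Algorithm1.
Variables (R : realType) (n m nK nK' : nat) (A : 'M[R]_n) (B : 'M[R]_(n, m)).
Variables (D W V S X : set 'cV[R]_n) (U : set 'cV[R]_m).
Variables (AK : 'M[R]_nK) (BK : 'M[R]_(nK, n)) (CK : 'M[R]_(m, nK)) (DK : 'M[R]_(m, n)).
Variables (AK' : 'M[R]_nK') (BK' : 'M[R]_(nK', n)) (CK' : 'M[R]_(m, nK')).
Variables (OmegaI : set 'cV[R]_n) (OmegaO : set 'cV[R]_(n + nK)) (eps_s : R).

Local Notation ACL := (A_CL A B AK BK CK DK).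
Local Notation BCL := (B_CL B BK DK).
Local Notation proj := (proj_x R n nK).
Local Notation P := (pdiff OmegaI (Nset V)).
Local Notation resp_z i := (proj *m ACL ^+ i *m BCL).
Local Notation resp_x i := (proj *m ACL ^+ i *m col_mx (1%:M : 'M[R]_n) (0 : 'M[R]_(nK, n))).
Local Notation equiv := (output_equiv AK CK AK' CK').
Local Notation reach_z N := (msum_iter (fun i => mimage (resp_z i) (Zset W V)) N).

Hypothesis S_poly : polytope S.
Hypothesis S_int : zero_in_interior S.
Hypothesis W_poly : polytope W.
Hypothesis W_int : zero_in_interior W.
Hypothesis D_poly : polytope D.
Hypothesis V_int : zero_in_interior V.
Hypothesis OmegaI_poly : polyhedron OmegaI.
Hypothesis eps_s_bnd : 0 < eps_s < 1.
Hypothesis I1 : OmegaI `<=` sscale eps_s S.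
Hypothesis I2 : exists2 alpha : R, 0 < alpha & cball0 alpha `<=` P.
Hypothesis I3 : exists beta : R, 0 < beta < 1 /\ forall N, reach_z N `<=` sscale beta P.

Lemma OmegaI_sub_S : OmegaI `<=` S.
Proof.
move=> x /I1 [s Ss <-].
by apply: polyhedron_scale => //; [exact: S_poly.1 | exact: zero_in_interior0 | exact: lt01_le01].
Qed.

Lemma P_coord_bound c : coord_bound S c -> coord_bound P c.
Proof.
move=> S_c x /(pdiff_sub (Nset0 (zero_in_interior0 V_int))) /I1.
exact: coord_bound_sscale (lt01_le01 eps_s_bnd) S_c x.
Qed.

(* Feeding [w = r sgn(.) e_l] over the horizon, I3 bounds the l-th column sums of
   the free responses, since they then add up coherently in coordinate p. *)
Lemma resp_x_abs_sum_bound :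
  exists2 K : R, 0 <= K & forall N p l, \sum_(i < N.+1) `|resp_x i p l| <= K.
Proof.
have [cS [cS_ge0 S_c]] := bounded_set_coord_bound S_poly.2.
have [r r_gt0 ball_W] := W_int.
have [beta [beta_bnd I3N]] := I3.
exists (cS / r); first by rewrite divr_ge0 // ltW.
move=> N p l.
pose sgn i : R := if 0 <= resp_x i p l then 1 else -1.
pose g i := col_mx ((r * sgn i) *: delta_mx l (0 : 'I_1)) (0 : 'cV[R]_n).
have Zg i : Zset W V (g i).
  exists ((r * sgn i) *: delta_mx l 0); last by exists 0; [exact: zero_in_interior0|].
  apply: ball_W; rewrite /cball0 /= enorm_delta normrM (gtr0_norm r_gt0) /sgn.
  by case: ifP => _; rewrite ?normrN normr1 mulr1.
have sum_in := I3N N _ (msum_iter_sum (fun i => resp_z i) N Zg).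
have coord_p : (\sum_(i < N.+1) resp_z i *m g i) p 0 = r * \sum_(i < N.+1) `|resp_x i p l|.
  rewrite summxE mulr_sumr; apply: eq_bigr => i _.
  rewrite -mulmxA B_CL_process_noise !mulmxA -scalemxAr mxE -colE mxE /sgn -mulrA.
  case: ifP => resp_ge0; first by rewrite mul1r ger0_norm.
  by rewrite mulN1r ltr0_norm // ltNge resp_ge0.
rewrite ler_pdivlMr // mulrC -coord_p; apply: le_trans (ler_norm _) _.
exact: coord_bound_sscale (lt01_le01 beta_bnd) (P_coord_bound S_c) _ sum_in p.
Qed.

(* Once the free response [resp_x T] is small enough, the effect of any
   [S_c] initial state fits in the margin that I2 and I3 leave in [P]. *)
Lemma exists_horizon : exists2 T, (0 < T)%N &
  forall x, Sconv A S W D x -> forall s, reach_z T.-1 s -> P (resp_x T *m x + s).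
Proof.
have [cS [cS_ge0 S_c]] := bounded_set_coord_bound S_poly.2.
have [cW [_ W_c]] := bounded_set_coord_bound W_poly.2.
have [cD [_ D_c]] := bounded_set_coord_bound D_poly.2.
have [c [c_ge0 Sc_c]] := coord_bound_Sconv A cS_ge0 S_c W_c D_c.
have [K K_ge0 resp_sum] := resp_x_abs_sum_bound.
have [alpha alpha_gt0 ball_P] := I2.
have [beta [/andP[beta_gt0 beta_lt1] I3N]] := I3.
pose a := n%:R ^+ 2 * c; pose gamma := (1 - beta) * alpha.
have a_ge0 : 0 <= a by rewrite mulr_ge0 ?sqr_ge0.
have gamma_gt0 : 0 < gamma by rewrite mulr_gt0 // subr_gt0.
pose eps := gamma / (a + 1).
have eps_gt0 : 0 < eps by rewrite divr_gt0 // ltr_wpDl.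
have [T T_gt0 resp_small] :=
  summable_eventually_small (M := fun i => resp_x i) eps_gt0 K_ge0 resp_sum.
exists T => // x Sc_x _ /I3N [r Pr <-].
rewrite addrC; apply: pdiff_absorb OmegaI_poly ball_P _ Pr _; first by rewrite ltW.
apply: le_trans (enorm_le_coord (t := n%:R * (eps * c)) _ _) _.
- by apply: mulr_ge0 => //; apply: mulr_ge0 => //; exact: ltW.
- apply: normr_mulmx_coord_le => [i j|]; [exact/ltW/resp_small | exact: Sc_c].
have -> : n%:R * (n%:R * (eps * c)) = gamma * (a / (a + 1)) by rewrite /eps /a; ring.
apply: ler_piMr; first exact: ltW.
by rewrite ler_pdivrMr ?ltr_wpDl // mul1r lerDl.
Qed.

Hypothesis markov_eq : forall i, CK *m AK ^+ i *m BK = CK' *m AK' ^+ i *m BK'.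
Hypothesis SX : S `<=` X.
Hypothesis O1 : sprod (Sconv A S W D) [set (0 : 'cV[R]_nK)] `<=` OmegaO.
Hypothesis O2 : msum (mimage ACL OmegaO) (mimage BCL (Zset W V)) `<=` OmegaO.
Hypothesis O3 : mimage proj OmegaO `<=` X.
Hypothesis O4 : msum (mimage (C_CL CK DK) OmegaO) (mimage (D_CL DK) (Zset W V)) `<=` U.
Hypothesis U_int : zero_in_interior U.

Section Trajectory.
Variables (d w v : nat -> 'cV[R]_n) (k0 : nat) (x0 : 'cV[R]_n).
Hypothesis d_in : forall k, D (d k).
Hypothesis w_in : forall k, W (w k).
Hypothesis v_in : forall k, V (v k).
Hypothesis x0_in : Sconv A S W D x0.

Local Notation run := (a1_run A B AK' BK' CK' DK S V OmegaI d w v k0 x0).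
Local Notation step := (a1_step A B AK' BK' CK' DK S V OmegaI d w v).
Local Notation sigma := (a1_sigma S V OmegaI).
Local Notation input := (a1_input CK' DK S V OmegaI).

Definition a1_inv (st : 'cV[R]_n * 'cV[R]_nK' * bool) : Prop :=
  let: (x, xK', sp) := st in
  if sp then exists2 xK, equiv xK xK' & OmegaO (col_mx x xK)
  else Sconv A S W D x.

Lemma a1_step_control k x xK' sp xK :
  equiv xK (a1_xh_used sp xK') -> sigma sp (x + v k) ->
  [/\ (step k (x, xK', sp)).2 = true,
      input sp xK' (x + v k) = C_CL CK DK *m col_mx x xK + D_CL DK *m col_mx (w k) (v k),
      equiv (AK *m xK + BK *m (x + v k)) (step k (x, xK', sp)).1.2 &
      col_mx (step k (x, xK', sp)).1.1 (AK *m xK + BK *m (x + v k)) =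
        ACL *m col_mx x xK + BCL *m col_mx (w k) (v k)].
Proof.
move=> xK_eq /= on.
have u_eq : input sp xK' (x + v k) = CK *m xK + DK *m (x + v k).
  by rewrite /a1_input on (output_equiv_output xK_eq).
split.
- by rewrite /a1_step on.
- by rewrite u_eq C_CL_output.
- by rewrite /a1_step on /=; apply: output_equiv_step.
rewrite A_CL_step /a1_step on /=; congr col_mx.
by rewrite -/(input sp xK' (x + v k)) u_eq scale1r subrr scale0r addr0.
Qed.

Lemma a1_sigma_false_S sp x k : sigma sp (x + v k) = false -> S x.
Proof.
rewrite /a1_sigma; case: ifP => // /set_mem SmV_y _.
by have := SmV_y (- v k); rewrite addrK; apply; exists (v k).
Qed.

Lemma a1_inv_step k st : a1_inv st -> let: (x, xK', sp) := st in
  [/\ X x, U (input sp xK' (x + v k)), (~~ sigma sp (x + v k) -> S x) & a1_inv (step k st)].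
Proof.
case: st => [[x xK'] sp] inv_st.
case on: (sigma sp (x + v k)); last first.
  have Sx := a1_sigma_false_S on.
  split; [exact: SX Sx | by rewrite /a1_input on; exact: zero_in_interior0 | by [] |].
  rewrite /a1_inv /a1_step on /=; apply: Splus_sub_Sconv.
  exists (A *m x + w k), (d k); split=> //; first by exists (A *m x), (w k); split=> //; exists x.
  by rewrite scale0r addr0 subr0 scale1r addrAC.
have [xK xK_eq xK_in] : exists2 xK, equiv xK (a1_xh_used sp xK') &
    OmegaO (col_mx x xK).
  case: sp inv_st on => /= inv_st on; first exact: inv_st.
  by exists 0; [exact: output_equiv0 | apply: O1; exists x => //; exists 0].
have [on' u_eq xK'_eq x_eq] := a1_step_control xK_eq on.
have z_in : Zset W V (col_mx (w k) (v k)) by exists (w k) => //; exists (v k).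
split; [| | by [] |].
- by apply: O3; exists (col_mx x xK) => //; rewrite proj_x_col_mx.
- rewrite u_eq; apply: O4; exists (C_CL CK DK *m col_mx x xK), (D_CL DK *m col_mx (w k) (v k)).
  by split=> //; [exists (col_mx x xK) | exists (col_mx (w k) (v k))].
rewrite /a1_inv; case: (step k (x, xK', sp)) on' xK'_eq x_eq => [[x1 xK1'] sp1] /= -> xK'_eq x_eq.
exists (AK *m xK + BK *m (x + v k)) => //; rewrite x_eq; apply: O2.
exists (ACL *m col_mx x xK), (BCL *m col_mx (w k) (v k)).
by split=> //; [exists (col_mx x xK) | exists (col_mx (w k) (v k))].
Qed.

Lemma a1_inv_run j : a1_inv (run j).
Proof.
elim: j => [|j IH] /=; first exact: x0_in.
by have := a1_inv_step (k0 + j) IH; case: (run j) => [[x xK'] sp] [].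
Qed.

Definition sigma_run j := sigma (run j).2 ((run j).1.1 + v (k0 + j)).

Lemma run_prev j : (run j.+1).2 = sigma_run j.
Proof. by rewrite /sigma_run /=; case: (run j) => [[x xK'] sp]. Qed.

Lemma run_closed_loop j0 t : (run j0).2 = false ->
  (forall i, (i < t)%N -> sigma_run (j0 + i)) ->
  exists2 xK, equiv xK (a1_xh_used (run (j0 + t)).2 (run (j0 + t)).1.2) &
  col_mx (run (j0 + t)).1.1 xK = ACL ^+ t *m col_mx (run j0).1.1 0 +
     \sum_(i < t) ACL ^+ i *m BCL *m
        col_mx (w (k0 + j0 + (t.-1 - i))%N) (v (k0 + j0 + (t.-1 - i))%N).
Proof.
move=> off0; elim: t => [|t IH] on_t.
  exists 0; rewrite addn0; first by rewrite off0; exact: output_equiv0.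
  by rewrite expr0 mul1mx big_ord0 addr0.
have [xK xK_eq x_eq] := IH (fun i lt_it => on_t i (ltnW lt_it)).
have := on_t t (ltnSn t); rewrite /sigma_run addnS [run (j0 + t).+1]/=.
move: xK_eq x_eq; case: (run (j0 + t)) => [[x xK'] sp] xK_eq x_eq on.
simpl in xK_eq, x_eq, on.
have [-> _ xK'_eq x'_eq] := a1_step_control xK_eq on.
exists (AK *m xK + BK *m (x + v (k0 + (j0 + t)))) => //.
have ACL_S i : ACL *m ACL ^+ i = ACL ^+ i.+1 by rewrite exprS.
rewrite x'_eq x_eq big_ord_recl /= expr0 mul1mx subn0 addnA mulmxDr mulmxA ACL_S.
rewrite mulmx_sumr -addrA; congr (_ + _); rewrite addrC; congr (_ + _).
apply: eq_bigr => i _; rewrite !mulmxA ACL_S.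
by rewrite /bump /= add1n; have -> : (t - i.+1 = t.-1 - i)%N by lia.
Qed.

Lemma sigma_run_returns T :
  (forall x, Sconv A S W D x -> forall s, reach_z T.-1 s -> P (resp_x T *m x + s)) ->
  (0 < T)%N -> forall j0, (run j0).2 = false -> sigma_run j0 ->
  exists t, (1 <= t <= T)%N /\ ~~ sigma_run (j0 + t).
Proof.
move=> horizon T_gt0 j0 off0 on0.
have [[t [t_bnd off_t]] | stays_on] :=
  pselect (exists t, (1 <= t < T)%N /\ ~~ sigma_run (j0 + t)).
  by exists t; split=> //; lia.
have on_t i : (i < T)%N -> sigma_run (j0 + i).
  case: i => [|i] lt_iT; first by rewrite addn0.
  by apply: contrapT => off_i; apply: stays_on; exists i.+1; split=> //; lia.
have [xK _ x_eq] := run_closed_loop off0 on_t.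
exists T; split; first by lia.
pose z i := col_mx (w (k0 + j0 + (T.-1 - i))%N) (v (k0 + j0 + (T.-1 - i))%N).
have Zz i : Zset W V (z i) by exists (w (k0 + j0 + (T.-1 - i))%N) => //; eexists.
have := msum_iter_sum (fun i => resp_z i) T.-1 Zz; rewrite prednK //.
have Sc_j0 : Sconv A S W D (run j0).1.1.
  by have := a1_inv_run j0; move: off0; case: (run j0) => [[x xK'] sp] /= ->.
move=> /(horizon _ Sc_j0).
set x := (run (j0 + T)).1.1; set vT := v (k0 + (j0 + T)).
have -> : resp_x T *m (run j0).1.1 + \sum_(i < T) resp_z i *m z i = x.
  rewrite -(proj_x_col_mx x xK) x_eq mulmxDr mulmx_sumr.
  have -> : col_mx (run j0).1.1 0 = col_mx (1%:M : 'M[R]_n) (0 : 'M_(nK, n)) *m (run j0).1.1.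
    by rewrite mul_col_mx mul1mx mul0mx.
  by congr (_ + _); [rewrite !mulmxA | apply: eq_bigr => i _; rewrite !mulmxA].
move=> Px.
have Om_y : OmV V OmegaI (x + vT).
  move=> v2 v2_in; rewrite -addrA (addrC vT); apply: Px.
  by exists v2, vT; split=> //; apply: v_in.
have S_y : SmV S V (x + vT) by move=> v2 /Om_y; apply: OmegaI_sub_S.
by rewrite /sigma_run /a1_sigma -/x -/vT (mem_set S_y) (mem_set Om_y) /= andbF.
Qed.

End Trajectory.

Lemma algorithm1_guarantees : exists Tmax : nat, (0 < Tmax)%N /\
  forall (k0 : nat) (x0 : 'cV[R]_n) (d w v : nat -> 'cV[R]_n),
    (forall k, D (d k)) -> (forall k, W (w k)) -> (forall k, V (v k)) ->
    Sconv A S W D x0 ->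
    let x := a1_x A B AK' BK' CK' DK S V OmegaI d w v k0 x0 in
    let u := a1_u A B AK' BK' CK' DK S V OmegaI d w v k0 x0 in
    let sigma := a1_sig A B AK' BK' CK' DK S V OmegaI d w v k0 x0 in
    [/\ forall k, (k0 <= k)%N -> X (x k) /\ U (u k),
        (sigma k0 -> exists T0, (1 <= T0 <= Tmax)%N /\ ~~ sigma (k0 + T0)%N) /\
        (forall k, (k0 < k)%N -> sigma k -> ~~ sigma k.-1 ->
           exists T, (1 <= T <= Tmax)%N /\ ~~ sigma (k + T)%N)
      & forall k, (k0 <= k)%N -> ~~ sigma k -> S (x k)].
Proof.
have [T T_gt0 horizon] := exists_horizon.
exists T; split=> // k0 x0 d w v d_in w_in v_in x0_in x u sigma.
have sigmaE k : (k0 <= k)%N -> sigma k = sigma_run d w v k0 x0 (k - k0).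
  by move=> le_k0k; rewrite /sigma /a1_sig /sigma_run /a1_prev /a1_y /a1_x subnKC.
have at_k k : (k0 <= k)%N -> [/\ X (x k), U (u k) & (~~ sigma k -> S (x k))].
  move=> _; have := a1_inv_step d_in w_in v_in k (a1_inv_run k0 d_in w_in v_in x0_in (k - k0)).
  rewrite /x /u /sigma /a1_u /a1_sig /a1_y /a1_x /a1_prev /a1_xh.
  by case: (a1_run _ _ _ _ _ _ _ _ _ d w v k0 x0 (k - k0)) => [[x1 xK'] sp] [].
have returns j0 := @sigma_run_returns d w v k0 x0 d_in w_in v_in x0_in T horizon T_gt0 j0.
split; [by move=> k /at_k [] | split | by move=> k /at_k []].
  rewrite sigmaE // subnn => on0.
  have [t [t_bnd off_t]] := returns 0%N erefl on0.
  by exists t; split=> //; rewrite sigmaE ?leq_addr // addKn.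
move=> k lt_k0k on_k off_prev.
have k_eq : (k - k0 = (k.-1 - k0).+1)%N by lia.
have off_k : (a1_run A B AK' BK' CK' DK S V OmegaI d w v k0 x0 (k - k0)).2 = false.
  by rewrite k_eq run_prev -sigmaE ?(negbTE off_prev) //; lia.
have on_k' : sigma_run d w v k0 x0 (k - k0) by rewrite -sigmaE // ltnW.
have [t [t_bnd off_t]] := returns _ off_k on_k'.
exists t; split=> //; rewrite sigmaE; last by lia.
by have -> : (k + t - k0 = k - k0 + t)%N by lia.
Qed.

End Algorithm1.

Unset Implicit Arguments.
Set Strict Implicit.
Set Printing Implicit Defensive.

Theorem corollary1 (R : realType) (n m nK nK' : nat)
  (A : 'M[R]_n) (B : 'M[R]_(n, m))
  (D W V S X : set 'cV[R]_n) (U : set 'cV[R]_m)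
  (AK : 'M[R]_nK) (BK : 'M[R]_(nK, n)) (CK : 'M[R]_(m, nK)) (DK : 'M[R]_(m, n))
  (AK' : 'M[R]_nK') (BK' : 'M[R]_(nK', n)) (CK' : 'M[R]_(m, nK')) (DK' : 'M[R]_(m, n))
  (OmegaI : set 'cV[R]_n) (OmegaO : set 'cV[R]_(n + nK)) (eps_s : R) :
  (* standing assumptions *)
  polytope D -> polytope W -> polytope V -> polytope S -> polytope X -> polytope U ->
  zero_in_interior D -> zero_in_interior W -> zero_in_interior V ->
  zero_in_interior S -> zero_in_interior X -> zero_in_interior U ->
  S `<=` X ->
  (exists eps_p eps_m : R, [/\ 0 < eps_p < 1, 0 < eps_m < 1,
      V `<=` sscale eps_p S & setneg V `<=` sscale eps_m S]) ->
  (exists2 r : R, 0 < r & @cball0 R n r `<=` S) ->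
  Splus A S W D `<=` X ->
  (* nominal controller: A_CL Schur *)
  schur (A_CL A B AK BK CK DK) ->
  (* Omega_I, Omega_O polyhedral, containing the origins *)
  polyhedron OmegaI -> OmegaI 0 -> polyhedron OmegaO -> OmegaO 0 ->
  (* I1 - I3 *)
  0 < eps_s < 1 ->
  OmegaI `<=` sscale eps_s S ->
  (exists2 alpha : R, 0 < alpha & @cball0 R n alpha `<=` pdiff OmegaI (Nset V)) ->
  (exists beta : R, 0 < beta < 1 /\
     forall N : nat,
       msum_iter (fun i => mimage (proj_x R n nK *m (A_CL A B AK BK CK DK) ^+ i
                                     *m B_CL B BK DK) (Zset W V)) N
       `<=` sscale beta (pdiff OmegaI (Nset V))) ->
  (* O1 - O4 *)
  sprod (Sconv A S W D) [set (0 : 'cV[R]_nK)] `<=` OmegaO ->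
  msum (mimage (A_CL A B AK BK CK DK) OmegaO) (mimage (B_CL B BK DK) (Zset W V))
    `<=` OmegaO ->
  mimage (proj_x R n nK) OmegaO `<=` X ->
  msum (mimage (C_CL CK DK) OmegaO) (mimage (D_CL DK) (Zset W V)) `<=` U ->
  (* (AK', BK', CK', DK') is another realization of K(z) *)
  same_tf AK BK CK DK AK' BK' CK' DK' ->
  exists Tmax : nat, (0 < Tmax)%N /\
  forall (k0 : nat) (x0 : 'cV[R]_n) (d w v : nat -> 'cV[R]_n),
    (forall k, D (d k)) -> (forall k, W (w k)) -> (forall k, V (v k)) ->
    Sconv A S W D x0 ->
    let x := a1_x A B AK' BK' CK' DK' S V OmegaI d w v k0 x0 in
    let u := a1_u A B AK' BK' CK' DK' S V OmegaI d w v k0 x0 in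
    let sigma := a1_sig A B AK' BK' CK' DK' S V OmegaI d w v k0 x0 in
    [/\ (* (a) *)
        forall k, (k0 <= k)%N -> X (x k) /\ U (u k),
        (* (b) *)
        (sigma k0 -> exists T0, (1 <= T0 <= Tmax)%N /\ ~~ sigma (k0 + T0)%N) /\
        (forall k, (k0 < k)%N -> sigma k -> ~~ sigma k.-1 ->
           exists T, (1 <= T <= Tmax)%N /\ ~~ sigma (k + T)%N)
      & (* (c) *)
        forall k, (k0 <= k)%N -> ~~ sigma k -> S (x k)].
Proof.
move=> D_poly W_poly _ S_poly _ _ _ W_int V_int S_int _ U_int SX _ _ _ _
  OmegaI_poly _ _ _ eps_s_bnd I1 I2 I3 O1 O2 O3 O4 tf_eq.
have [<- markov_eq] := same_tf_markov tf_eq.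
exact: (algorithm1_guarantees S_poly S_int W_poly W_int D_poly V_int OmegaI_poly
  eps_s_bnd I1 I2 I3 markov_eq SX O1 O2 O3 O4 U_int).
Qed.
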